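(* Let $K$ be a compact group and $K_1,\dots,K_n$ subgroups of $K$ such that $K=(K_1K_2\cdots K_n)^N$ for some $N\in\mathbb{N}^*$. Then for any finite-dimensional unitary representation $(V,\tau)$ of $K$ without non-zero invariant vector, any $x\in V$, and any $y_1,\dots,y_n\in V$ with $y_i$ invariant under $K_i$ for each $i$, we have $$\|x\|_V\leq 2nN\max_{1\leq i\leq n}\|x-y_i\|_V.$$
   Context: $(K_1K_2\cdots K_n)^N$ denotes the set of products $(k_{11}\cdots k_{n1})\cdots(k_{1N}\cdots k_{nN})$ with $k_{ij}\in K_i$. Representations are continuous. *)

From HB Require Import structures.
From mathcomp Require Import all_boot all_order all_algebra.
From mathcomp Require Import all_classical all_reals all_analysis.
From mathcomp Require Import complex.
Import numFieldNormedType.Exports.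

Set Implicit Arguments.
Unset Strict Implicit.
Unset Printing Implicit Defensive.

Import Order.TTheory GRing.Theory Num.Theory.
Local Open Scope ring_scope.
Local Open Scope classical_set_scope.

Record compact_group (G : topologicalType) (mul : G -> G -> G) (inv : G -> G)
    (e : G) : Prop := CompactGroup {
  cg_mulA : forall x y z, mul x (mul y z) = mul (mul x y) z;
  cg_mul1g : forall x, mul e x = x;
  cg_mulg1 : forall x, mul x e = x;
  cg_mulVg : forall x, mul (inv x) x = e;
  cg_mulgV : forall x, mul x (inv x) = e;
  cg_mul_cont : continuous (fun p : G * G => mul p.1 p.2);
  cg_inv_cont : continuous inv;
  cg_hausdorff : hausdorff_space G;
  cg_compact : compact [set: G]
}.

Definition is_subgroup (G : Type) (mul : G -> G -> G) (inv : G -> G) (e : G)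
    (H : set G) : Prop :=
  H e /\ (forall x y, H x -> H y -> H (mul x y)) /\ (forall x, H x -> H (inv x)).

Definition gprod (G : Type) (mul : G -> G -> G) (e : G) (s : seq G) : G :=
  foldr mul e s.

Definition prod_power (G : Type) (mul : G -> G -> G) (e : G) (n N : nat)
    (Ks : 'I_n -> set G) : set G :=
  [set g | exists k : 'I_N -> 'I_n -> G,
      (forall j i, Ks i (k j i)) /\
      g = gprod mul e [seq gprod mul e [seq k j i | i <- enum 'I_n] | j <- enum 'I_N]].

(* Finite-dimensional unitary representations, realised (after choosing an
   orthonormal basis) on C^d = 'cV[R[i]]_d with the standard Hermitian product. *)
Definition conjT (R : rcfType) (d : nat) (A : 'M[R[i]]_d) : 'M[R[i]]_d :=
  (map_mx (@conjc R) A)^T.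

Definition unitary_rep (R : realType) (G : topologicalType) (mul : G -> G -> G)
    (d : nat) (tau : G -> 'M[R[i]]_d) : Prop :=
  (forall g h, tau (mul g h) = tau g *m tau h) /\
  (forall g, conjT (tau g) *m tau g = 1%:M) /\
  (forall i j, continuous (fun g => complex.Re (tau g i j)) /\
               continuous (fun g => complex.Im (tau g i j))).

Definition hnorm (R : rcfType) (d : nat) (x : 'cV[R[i]]_d) : R :=
  Num.sqrt (\sum_(i < d) ((complex.Re (x i 0)) ^+ 2 + (complex.Im (x i 0)) ^+ 2)).

Definition invariant_under (G : Type) (R : rcfType) (d : nat)
    (tau : G -> 'M[R[i]]_d) (H : set G) (v : 'cV[R[i]]_d) : Prop :=
  forall k, H k -> tau k *m v = v.

From HB Require Import structures.
From mathcomp Require Import all_boot all_order all_algebra.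
From mathcomp Require Import all_classical all_reals all_analysis.
From mathcomp Require Import complex.
From mathcomp Require Import ring lra.
Import numFieldNormedType.Exports.
Import Order.TTheory GRing.Theory Num.Theory.
Local Open Scope ring_scope.
Local Open Scope classical_set_scope.

Set Implicit Arguments.
Unset Strict Implicit.
Unset Printing Implicit Defensive.

(* For [g] in [K] let [delta g = |x - tau g x|].  Since [tau] is unitary, [delta]
   is subadditive along products, and [delta k <= 2 |x - y_i|] for [k] in [K_i];
   as every [g] is a product of [nN] such elements, [delta <= 2nN max_i |x - y_i|].
   It remains to see that [|x| <= sup delta] when there is no non-zero invariant
   vector; this replaces averaging over the Haar measure.  The midpoint-convex hull
   of the orbit of [x] lies in the ball of radius [sup delta] around [x] and
   contains arbitrarily short vectors: a point of nearly minimal norm is nearly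
   invariant by the parallelogram law, and in finite dimension finitely many
   [1 - tau g] already have a trivial common kernel, so nearly invariant vectors
   are short. *)

Lemma sum_mul_sqr_le (R : realFieldType) (I : finType) (a b : I -> R) :
  (\sum_i a i * b i) ^+ 2 <= (\sum_i a i ^+ 2) * (\sum_i b i ^+ 2).
Proof.
set A := \sum_i a i ^+ 2; set B := \sum_i b i ^+ 2; set S := \sum_i a i * b i.
have B_ge0 : 0 <= B by apply: sumr_ge0 => i _; apply: sqr_ge0.
have [B0|B_neq0] := eqVneq B 0.
  have b0 i : b i = 0.
    apply/eqP; rewrite -sqrf_eq0; apply/eqP/(psumr_eq0P _ B0) => // j _.
    exact: sqr_ge0.
  by rewrite /S big1 ?expr0n ?B0 ?mulr0 // => i _; rewrite b0 mulr0.
(* Lagrange: the sum of the squares of [B a i - S b i] is [B (A B - S^2)]. *)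
have : 0 <= \sum_i (B * a i - S * b i) ^+ 2 by apply: sumr_ge0 => i _; apply: sqr_ge0.
have -> : \sum_i (B * a i - S * b i) ^+ 2 = B * (A * B - S ^+ 2).
  transitivity
    (\sum_i (B ^+ 2 * a i ^+ 2 - 2 * B * S * (a i * b i) + S ^+ 2 * b i ^+ 2)).
    by apply: eq_bigr => i _; ring.
  by rewrite big_split sumrB /= -!mulr_sumr -/A -/B -/S; ring.
by rewrite pmulr_rge0 ?subr_ge0 // lt_def B_neq0.
Qed.

Section HermitianNorm.
Variables (R : rcfType) (d : nat).
Implicit Types (u v : 'cV[R[i]]_d) (z : R[i]).

Definition hnorm2 v : R :=
  \sum_(i < d) (complex.Re (v i 0) ^+ 2 + complex.Im (v i 0) ^+ 2).

(* The 2d real coordinates of [v]: [(i, true)] for [Re], [(i, false)] for [Im]. *)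
Definition reim v (p : 'I_d * bool) : R :=
  if p.2 then complex.Re (v p.1 0) else complex.Im (v p.1 0).

Lemma hnormE v : hnorm v = Num.sqrt (hnorm2 v). Proof. by []. Qed.

Lemma hnorm2_ge0 v : 0 <= hnorm2 v.
Proof. by apply: sumr_ge0 => i _; rewrite addr_ge0 ?sqr_ge0. Qed.

Lemma hnorm_ge0 v : 0 <= hnorm v. Proof. exact: sqrtr_ge0. Qed.

Lemma sqr_hnorm v : hnorm v ^+ 2 = hnorm2 v.
Proof. by rewrite sqr_sqrtr ?hnorm2_ge0. Qed.

Lemma hnorm2_reim v : hnorm2 v = \sum_p reim v p ^+ 2.
Proof.
transitivity (\sum_i \sum_b reim v (i, b) ^+ 2).
  by apply: eq_bigr => i _; rewrite big_bool.
by rewrite pair_big; apply: eq_bigr => -[].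
Qed.

Lemma reimD u v p : reim (u + v) p = reim u p + reim v p.
Proof. by case: p => i []; rewrite /reim /= mxE; case: (u i 0) (v i 0) => ? ? []. Qed.

Lemma reimN v p : reim (- v) p = - reim v p.
Proof. by case: p => i []; rewrite /reim /= mxE; case: (v i 0). Qed.

Lemma hnorm2D u v :
  hnorm2 (u + v) = hnorm2 u + hnorm2 v + 2 * \sum_p reim u p * reim v p.
Proof.
rewrite !hnorm2_reim mulr_sumr -!big_split /=.
by apply: eq_bigr => p _; rewrite reimD; ring.
Qed.

Lemma reim_dot_le u v : \sum_p reim u p * reim v p <= hnorm u * hnorm v.
Proof.
apply: le_trans (ler_norm _) _.
rewrite -(@ler_pXn2r _ 2) ?nnegrE ?mulr_ge0 ?hnorm_ge0 //.
by rewrite real_normK ?num_real // exprMn !sqr_hnorm !hnorm2_reim sum_mul_sqr_le.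
Qed.

Lemma ler_hnormD u v : hnorm (u + v) <= hnorm u + hnorm v.
Proof.
rewrite -(@ler_pXn2r _ 2) ?nnegrE ?addr_ge0 ?hnorm_ge0 //.
rewrite sqr_hnorm hnorm2D sqrrD !sqr_hnorm -mulr_natr.
by have := reim_dot_le u v; lra.
Qed.

Lemma hnorm0 : hnorm (0 : 'cV[R[i]]_d) = 0.
Proof. by rewrite hnormE /hnorm2 big1 ?sqrtr0 // => i _; rewrite mxE expr0n addr0. Qed.

Lemma hnormN v : hnorm (- v) = hnorm v.
Proof.
rewrite !hnormE !hnorm2_reim; congr Num.sqrt.
by apply: eq_bigr => p _; rewrite reimN sqrrN.
Qed.

Lemma hnorm_distC u v : hnorm (u - v) = hnorm (v - u).
Proof. by rewrite -hnormN opprB. Qed.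

Lemma ler_hnorm_sum (I : finType) (F : I -> 'cV[R[i]]_d) :
  hnorm (\sum_i F i) <= \sum_i hnorm (F i).
Proof.
apply: (big_ind2 (fun u a => hnorm u <= a)) => [|u a v b ua vb|//].
  by rewrite hnorm0.
exact: le_trans (ler_hnormD u v) (lerD ua vb).
Qed.

Lemma hnorm2Z z v :
  hnorm2 (z *: v) = (complex.Re z ^+ 2 + complex.Im z ^+ 2) * hnorm2 v.
Proof.
rewrite /hnorm2 mulr_sumr; apply: eq_bigr => i _; rewrite mxE.
by case: z (v i 0) => ? ? [? ?] /=; ring.
Qed.

Lemma hnormZ z v : hnorm (z *: v) = Normc.normc z * hnorm v.
Proof. by rewrite hnormE hnorm2Z sqrtrM ?addr_ge0 ?sqr_ge0 //; case: z. Qed.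

Lemma normc_entry_le_hnorm v k : Normc.normc (v k 0) <= hnorm v.
Proof.
rewrite hnormE /hnorm2 (bigD1 k) //=; case: (v k 0) => a b /=.
set rest := \sum_(i < d | i != k) _.
have rest_ge0 : 0 <= rest by apply: sumr_ge0 => i _; rewrite addr_ge0 ?sqr_ge0.
by rewrite ler_sqrt ?lerDl // addr_ge0 ?addr_ge0 ?sqr_ge0.
Qed.

Lemma hnorm_mulmx_le (Y : 'M[R[i]]_d) v :
  hnorm (Y *m v) <= (\sum_k hnorm (col k Y)) * hnorm v.
Proof.
have -> : Y *m v = \sum_k v k 0 *: col k Y.
  apply/matrixP => i j; rewrite ord1 !mxE summxE.
  by apply: eq_bigr => k _; rewrite !mxE mulrC.
apply: le_trans (ler_hnorm_sum _) _; rewrite mulr_suml; apply: ler_sum => k _.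
by rewrite hnormZ mulrC ler_wpM2l ?hnorm_ge0 ?normc_entry_le_hnorm.
Qed.

Lemma hnorm2_adjoint v : hnorm2 v = complex.Re (((map_mx conjc v)^T *m v) 0 0).
Proof.
rewrite !mxE /hnorm2; elim/big_rec2: _ => [//|i a _ _ ->].
by rewrite !mxE; case: (v i 0) a => ? ? [? ?] /=; ring.
Qed.

Lemma hnorm2_unitary (A : 'M[R[i]]_d) v :
  conjT A *m A = 1%:M -> hnorm2 (A *m v) = hnorm2 v.
Proof.
move=> AA1; rewrite !hnorm2_adjoint map_mxM trmx_mul.
by rewrite -mulmxA (mulmxA _ A) -/(conjT A) AA1 mul1mx.
Qed.

Lemma hnorm_unitary (A : 'M[R[i]]_d) v :
  conjT A *m A = 1%:M -> hnorm (A *m v) = hnorm v.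
Proof. by move=> AA1; rewrite !hnormE hnorm2_unitary. Qed.

Definition midpoint u v := (2^-1)%:C%C *: (u + v).

Lemma hnorm2_midpoint u v :
  hnorm2 (u - v) = 2 * hnorm2 u + 2 * hnorm2 v - 4 * hnorm2 (midpoint u v).
Proof.
rewrite hnorm2Z /= expr0n addr0 !hnorm2_reim mulrA !mulr_sumr -big_split -sumrB /=.
by apply: eq_bigr => p _; rewrite reimD reimN !reimD; field.
Qed.

Lemma hnorm_midpoint_le u v : hnorm (midpoint u v) <= (hnorm u + hnorm v) / 2.
Proof.
rewrite hnormZ /= expr0n addr0 sqrtr_sqr ger0_norm ?invr_ge0 // mulrC.
by rewrite ler_wpM2r ?invr_ge0 ?ler_hnormD.
Qed.

Lemma mulmx_midpoint (A : 'M[R[i]]_d) u v :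
  A *m midpoint u v = midpoint (A *m u) (A *m v).
Proof. by rewrite -scalemxAr mulmxDr. Qed.

Lemma subr_midpoint w u v : w - midpoint u v = midpoint (w - u) (w - v).
Proof.
rewrite /midpoint addrACA -opprD scalerBr; congr (_ - _).
have half2 : 2^-1 + 2^-1 = 1 :> R by lra.
by rewrite scalerDr -scalerDl -rmorphD /= half2 scale1r.
Qed.

End HermitianNorm.

Section FiniteSpan.
Variables (F : fieldType) (n : nat) (I : Type) (A : I -> 'M[F]_n).

(* Adding an [A g] outside the current span increases its rank, which is at most [n]. *)
Lemma exists_spanning_seq :
  exists s : seq I, forall g, (A g <= (\sum_(h <- s) A h)%MS)%MS.
Proof.
suff [s [spans|rank_gt]] : exists s : seq I,
    (forall g, (A g <= (\sum_(h <- s) A h)%MS)%MS) \/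
    (n < \rank (\sum_(h <- s) A h)%MS)%N.
- by exists s.
- by have := rank_leq_col (\sum_(h <- s) A h)%MS; rewrite leqNgt rank_gt.
elim: n.+1 => [|k [s [spans|rank_ge]]]; [by exists [::]; right | by exists s; left |].
have [spans|/existsNP [g not_sub]] :=
  pselect (forall g, (A g <= (\sum_(h <- s) A h)%MS)%MS); first by exists s; left.
exists (g :: s); right; rewrite big_cons.
apply: leq_ltn_trans rank_ge (rank_ltmx _); rewrite ltmxE addsmxSr /=.
by apply/negP => sub; apply: not_sub; apply: submx_trans (addsmxSl _ _) sub.
Qed.

Lemma row_full_common_kernel0 (S : 'M[F]_n) :
  (forall g, (A g <= S)%MS) ->
  (forall v : 'cV[F]_n, (forall g, A g *m v = 0) -> v = 0) -> row_full S.
Proof.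
move=> spans ker0; rewrite -cokermx_eq0.
have col0 j : col j (cokermx S) = 0.
  rewrite colE; apply: ker0 => g; have [X ->] := submxP (spans g).
  by rewrite -mulmxA (mulmxA S) mulmx_coker mul0mx mulmx0.
apply/eqP/matrixP => i j.
by have := congr1 (fun M : 'cV_n => M i 0) (col0 j); rewrite !mxE.
Qed.

End FiniteSpan.

Lemma coercive_common_kernel0 (R : rcfType) (d : nat) (I : Type)
    (A : I -> 'M[R[i]]_d) :
  (forall v : 'cV[R[i]]_d, (forall g, A g *m v = 0) -> v = 0) ->
  exists L : R, 0 <= L /\
    forall v B, (forall g, hnorm (A g *m v) <= B) -> hnorm v <= L * B.
Proof.
move=> ker0; have [s spans] := exists_spanning_seq A.
have := row_full_common_kernel0 spans ker0.
rewrite -sub1mx big_tnth => /sub_sumsmxP [Y id_sum].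
exists (\sum_j \sum_k hnorm (col k (Y j))); split.
  by apply: sumr_ge0 => j _; apply: sumr_ge0 => k _; apply: hnorm_ge0.
move=> v B bound; rewrite -[v]mul1mx id_sum mulmx_suml mulr_suml.
apply: le_trans (ler_hnorm_sum _) (ler_sum _ _) => j _.
rewrite -mulmxA; apply: le_trans (hnorm_mulmx_le _ _) _.
by rewrite ler_wpM2l ?bound ?sumr_ge0 // => k _; apply: hnorm_ge0.
Qed.

Section MidpointHull.
Variables (R : rcfType) (d : nat).
Implicit Types (X : set 'cV[R[i]]_d) (c w : 'cV[R[i]]_d).

Inductive midpoint_hull X : set 'cV[R[i]]_d :=
| hull_base c of X c : midpoint_hull X c
| hull_midpoint a b of midpoint_hull X a & midpoint_hull X b :
    midpoint_hull X (midpoint a b).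

Lemma midpoint_hull_ball X w D :
  (forall c, X c -> hnorm (w - c) <= D) ->
  forall c, midpoint_hull X c -> hnorm (w - c) <= D.
Proof.
move=> ballX c; elim=> [{}c /ballX //|a b _ wa _ wb].
rewrite subr_midpoint; apply: le_trans (hnorm_midpoint_le _ _) _; lra.
Qed.

Lemma midpoint_hull_mulmx X (A : 'M[R[i]]_d) :
  (forall c, X c -> X (A *m c)) ->
  forall c, midpoint_hull X c -> midpoint_hull X (A *m c).
Proof.
move=> AX c; elim=> [{}c /AX|a b _ Aa _ Ab]; first exact: hull_base.
by rewrite mulmx_midpoint; apply: hull_midpoint.
Qed.

End MidpointHull.

Section UnitaryRepresentation.
Variables (R : rcfType) (d : nat) (G : Type) (mul : G -> G -> G) (e : G).
Variable tau : G -> 'M[R[i]]_d.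
Hypothesis tauM : forall g h, tau (mul g h) = tau g *m tau h.
Hypothesis tau_unitary : forall g, conjT (tau g) *m tau g = 1%:M.
(* [e] is only assumed idempotent; unitarity of [tau e] then forces [tau e = 1]. *)
Hypothesis e_idem : mul e e = e.

Lemma hnorm_tau g v : hnorm (tau g *m v) = hnorm v.
Proof. exact: hnorm_unitary. Qed.

Lemma tau_unit : tau e = 1%:M.
Proof.
have tau_e_idem : tau e *m tau e = tau e by rewrite -tauM e_idem.
by rewrite -[tau e]mul1mx -(tau_unitary e) -mulmxA tau_e_idem.
Qed.

Variable x : 'cV[R[i]]_d.

Definition displacement g := hnorm (x - tau g *m x).

Lemma displacementM g h : displacement (mul g h) <= displacement g + displacement h.
Proof.
rewrite /displacement.
have -> : x - tau (mul g h) *m x = (x - tau g *m x) + tau g *m (x - tau h *m x).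
  by rewrite tauM -mulmxA mulmxBr addrA subrK.
by rewrite -(hnorm_tau g (x - tau h *m x)) ler_hnormD.
Qed.

Lemma displacement_gprod (s : seq G) :
  displacement (gprod mul e s) <= \sum_(g <- s) displacement g.
Proof.
elim: s => [|g s IHs].
  by rewrite big_nil /displacement /= tau_unit mul1mx subrr hnorm0.
by rewrite big_cons; apply: le_trans (displacementM _ _) (lerD _ IHs).
Qed.

Lemma displacement_gprod_ord m (f : 'I_m -> G) b :
  (forall i, displacement (f i) <= b) ->
  displacement (gprod mul e [seq f i | i <- enum 'I_m]) <= m%:R * b.
Proof.
move=> fb; apply: le_trans (displacement_gprod _) _.
by rewrite big_map big_enum /= -[m in m%:R]card_ord mulr_natl -sumr_const; apply: ler_sum.
Qed.

Lemma displacement_fixed k y : tau k *m y = y -> displacement k <= 2 * hnorm (x - y).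
Proof.
move=> fixed; rewrite /displacement.
have -> : x - tau k *m x = (x - y) + tau k *m (y - x).
  by rewrite mulmxBr fixed addrA subrK.
by apply: le_trans (ler_hnormD _ _) _; rewrite hnorm_tau hnorm_distC; lra.
Qed.

End UnitaryRepresentation.

Section NoInvariantVectors.
Variables (R : realType) (d : nat) (G : Type) (mul : G -> G -> G).
Variable tau : G -> 'M[R[i]]_d.
Hypothesis tauM : forall g h, tau (mul g h) = tau g *m tau h.
Hypothesis tau_unitary : forall g, conjT (tau g) *m tau g = 1%:M.
Hypothesis no_invariant : forall v : 'cV[R[i]]_d, (forall g, tau g *m v = v) -> v = 0.

Lemma coercive_displacement : exists L : R, 0 <= L /\
  forall v B, (forall g, displacement tau v g <= B) -> hnorm v <= L * B.
Proof.
have ker0 (v : 'cV[R[i]]_d) : (forall g, (1%:M - tau g) *m v = 0) -> v = 0.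
  move=> Av0; apply: no_invariant => g; apply/eqP.
  by rewrite eq_sym -subr_eq0 -[X in X - _]mul1mx -mulmxBl Av0.
have [L [L_ge0 coerce]] := coercive_common_kernel0 ker0.
exists L; split=> // v B bound; apply: coerce => g.
by rewrite mulmxBl mul1mx; apply: bound.
Qed.

Variable x : 'cV[R[i]]_d.

Let hull := midpoint_hull (range (fun g => tau g *m x)).

Lemma hull_tau g c : hull c -> hull (tau g *m c).
Proof.
apply: midpoint_hull_mulmx => _ [h _ <-].
by exists (mul g h) => //; rewrite tauM mulmxA.
Qed.

(* Let [c] nearly minimise [hnorm2] on the hull.  Its midpoint with [tau g c]
   is in the hull, so by the parallelogram law [c] is nearly invariant, hence
   short by coercivity. *)
Lemma exists_short_in_hull (g0 : G) (eps : R) :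
  0 < eps -> exists2 c, hull c & hnorm2 c <= eps.
Proof.
move=> eps_gt0; have [L [L_ge0 coerce]] := coercive_displacement.
pose E := [set hnorm2 c | c in hull].
have E_inf : has_inf E.
  split; last by exists 0 => _ [c _ <-]; apply: hnorm2_ge0.
  by exists (hnorm2 (tau g0 *m x)), (tau g0 *m x) => //; apply: hull_base; exists g0.
have inf_le (c : 'cV[R[i]]_d) : hull c -> inf E <= hnorm2 c.
  by move=> hull_c; apply: (ge_inf E_inf.2); exists c.
have K_gt0 : 0 < 4 * L ^+ 2 + 1 by have := sqr_ge0 L; lra.
pose delta := eps / (4 * L ^+ 2 + 1).
have delta_gt0 : 0 < delta by rewrite divr_gt0.
have [_ [c hull_c <-] c_near] := inf_adherent delta_gt0 E_inf.
exists c => //.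
have near_invariant g : displacement tau c g <= Num.sqrt (4 * delta).
  have := inf_le _ (hull_midpoint hull_c (hull_tau g hull_c)).
  rewrite /displacement hnormE ler_sqrt; last by lra.
  by rewrite hnorm2_midpoint (hnorm2_unitary _ (tau_unitary g)); lra.
have c_short := coerce c _ near_invariant.
rewrite -sqr_hnorm; apply: le_trans (_ : (L * Num.sqrt (4 * delta)) ^+ 2 <= _).
  by rewrite ler_pXn2r ?nnegrE ?hnorm_ge0 ?mulr_ge0 ?sqrtr_ge0.
rewrite exprMn sqr_sqrtr; last by lra.
have -> : L ^+ 2 * (4 * delta) = eps * (4 * L ^+ 2 / (4 * L ^+ 2 + 1)).
  by rewrite /delta; field; apply: lt0r_neq0.
by rewrite ler_piMr ?ltW // ltr_pdivrMr //; lra.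
Qed.

Theorem hnorm_le_displacement (g0 : G) D :
  (forall g, displacement tau x g <= D) -> hnorm x <= D.
Proof.
move=> bound; apply/ler_addgt0Pr => eps eps_gt0.
have [c hull_c c_short] := exists_short_in_hull g0 (exprn_gt0 2 eps_gt0).
rewrite -[x](subrK c); apply: le_trans (ler_hnormD _ _) (lerD _ _).
  by apply: midpoint_hull_ball hull_c => _ [g _ <-]; apply: bound.
by rewrite -(@ler_pXn2r _ 2) ?nnegrE ?hnorm_ge0 ?sqr_hnorm ?(ltW eps_gt0).
Qed.

End NoInvariantVectors.

Theorem lemma3p10 (R : realType) (G : topologicalType)
    (mul : G -> G -> G) (inv : G -> G) (e : G)
    (hG : compact_group mul inv e)
    (n N : nat) (hn : (0 < n)%N) (hN : (0 < N)%N) (Ks : 'I_n -> set G)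
    (hKs : forall i, is_subgroup mul inv e (Ks i))
    (hprod : [set: G] = prod_power mul e N Ks)
    (d : nat) (tau : G -> 'M[R[i]]_d) (htau : unitary_rep mul tau)
    (hnoinv : forall v : 'cV[R[i]]_d, invariant_under tau [set: G] v -> v = 0)
    (x : 'cV[R[i]]_d) (y : 'I_n -> 'cV[R[i]]_d)
    (hy : forall i, invariant_under tau (Ks i) (y i)) :
  hnorm x <= (2 * n * N)%:R * \big[Num.max/0]_(i < n) hnorm (x - y i).
Proof.
have [tauM [tau_unitary _]] := htau.
have ee : mul e e = e := cg_mul1g hG e.
set M := \big[Num.max/0]_(i < n) hnorm (x - y i).
apply: (hnorm_le_displacement tauM tau_unitary _ e) => [v inv_v | g].
  by apply: hnoinv => g _; apply: inv_v.
have [k [k_in ->]] : prod_power mul e N Ks g by rewrite -hprod.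
have -> : (2 * n * N)%:R * M = N%:R * (n%:R * (2 * M)) by rewrite !natrM; ring.
apply: (displacement_gprod_ord tauM tau_unitary ee) => j.
apply: (displacement_gprod_ord tauM tau_unitary ee) => i.
apply: le_trans (displacement_fixed tau_unitary x (hy i _ (k_in j i))) _.
by rewrite ler_pM2l // le_bigmax.
Qed.
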